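(* For all integers $s,d\geq 1$ there exists an integer $h'(s,d)$ such that the following holds. Let $S$ be a set of $s$ nonzero vectors in $\mathbb{R}^d$, and let $\mathcal{F}=\{U_1,\dots,U_n\}$ be a finite family where each $U_i$ is (the underlying set of) a polyhedral subcomplex of some polytope $P_i\subseteq\mathbb{R}^d$ which can be obtained as an intersection of half-spaces whose normal vectors belong to $S$. Then $\mathcal{F}$ has Helly number at most $h'(s,d)$.
   Context: A polytope is a bounded intersection of finitely many closed half-spaces; a polyhedral subcomplex of a polytope $P$ is a collection of faces of $P$ closed under taking faces. The Helly number of a family $\mathcal{F}$ of sets is defined as follows: if $\bigcap_{U\in\mathcal{F}}U=\emptyset$, it is the largest size of a subfamily $\mathcal{G}\subseteq\mathcal{F}$ such that $\bigcap\mathcal{G}=\emptyset$ but every proper subfamily of $\mathcal{G}$ has nonempty intersection; otherwise the Helly number is $1$. *)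

From HB Require Import structures.
From mathcomp Require Import all_boot all_order all_algebra.
From mathcomp Require Import boolp classical_sets.
From mathcomp Require Import Rstruct.
From Stdlib Require Rdefinitions.
Set Implicit Arguments. Unset Strict Implicit. Unset Printing Implicit Defensive.
Import Order.TTheory GRing.Theory Num.Theory.
Local Open Scope ring_scope.
Local Open Scope classical_set_scope.

Notation vec d := (matrix Rdefinitions.R 1 d).

Definition dotv (d : nat) (u v : vec d) : Rdefinitions.R := \sum_(i < d) u ord0 i * v ord0 i.

Definition halfspace (d : nat) (a : vec d) (b : Rdefinitions.R) : set (vec d) :=
  [set x | dotv a x <= b].

Definition bounded_set (d : nat) (P : set (vec d)) : Prop :=
  exists M : Rdefinitions.R, forall x, P x -> forall i : 'I_d, `|x ord0 i| <= M.

Definition S_polytope (d : nat) (S : seq (vec d)) (P : set (vec d)) : Prop :=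
  bounded_set P /\
  exists H : seq (vec d * Rdefinitions.R),
    (forall h, h \in H -> h.1 \in S) /\
    P = [set x | forall h, h \in H -> halfspace h.1 h.2 x].

(* F is a face of the (polytope) set P: F = P ∩ {c.x = delta} for a valid
   inequality c.x <= delta of P (includes P itself and the empty face) *)
Definition face (d : nat) (P F : set (vec d)) : Prop :=
  exists (c : vec d) (delta : Rdefinitions.R),
    (forall x, P x -> dotv c x <= delta) /\
    F = [set x | P x /\ dotv c x = delta].

Definition subcomplex (d : nat) (P : set (vec d)) (C : set (set (vec d))) : Prop :=
  (forall F, C F -> face P F) /\
  (forall F G, C F -> face F G -> C G).

Definition underlying (d : nat) (C : set (set (vec d))) : set (vec d) :=
  [set x | exists F, C F /\ F x].

Definition fam_inter (T : Type) (n : nat) (U : 'I_n -> set T) (G : {set 'I_n}) : set T :=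
  [set x | forall i, i \in G -> U i x].

Definition helly_critical (T : Type) (n : nat) (U : 'I_n -> set T) (G : {set 'I_n}) : Prop :=
  fam_inter U G = set0 /\
  (forall G' : {set 'I_n}, G' \proper G -> fam_inter U G' !=set0).

Definition helly_number (T : Type) (n : nat) (U : 'I_n -> set T) : nat :=
  if `[< fam_inter U [set: 'I_n] = set0 >]
  then \max_(G : {set 'I_n} | `[< helly_critical U G >]) #|G|
  else 1.

From mathcomp Require Import all_boot all_order all_algebra.
From mathcomp Require Import boolp classical_sets Rstruct.
From mathcomp Require Import ring lra zify.
Set Implicit Arguments. Unset Strict Implicit. Unset Printing Implicit Defensive.
Import Order.TTheory GRing.Theory Num.Theory.

(* Take a minimal subfamily G with empty intersection and, for each e in G, a point x_e
   lying in every member of G other than U_e.  Applying the Erdos-Szekeres-type bound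
   [ramsey3] once for each normal direction a in S, among [monotone_bound s 4] indices there
   are four, i, j, l, m in enumeration order, such that every form <a, .> is strictly
   increasing, strictly decreasing or constant along x_i, x_j, x_l, x_m.  The points x_i,
   x_l, x_m lie in U_j.  Monotonicity puts x_j in P_j (it lies between x_i and x_l in every
   direction of S) and makes every inequality of P_j that is tight at x_l tight at x_j, so
   the segment from x_j through x_l extends beyond x_l inside P_j; the exposed face of U_j
   containing x_l must then contain x_j.  So x_j lies in every member of G, a contradiction. *)

Lemma sorted_cons_filter (T : eqType) (r : rel T) x s s' : transitive r ->
  subseq s' [seq y <- s | r x y] -> sorted r s' -> sorted r (x :: s').
Proof.
move=> r_tr sub_s' sorted_s'; rewrite /= (path_sortedE r_tr) sorted_s' andbT.
by apply/allP => y /(mem_subseq sub_s'); rewrite mem_filter => /andP[].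
Qed.

Section TransitiveRamsey.
Variables (T : eqType) (r1 r2 r3 : rel T).
Hypotheses (r1_trans : transitive r1) (r2_trans : transitive r2)
  (r3_trans : transitive r3).
Hypothesis r_total : forall x y, [|| r1 x y, r2 x y | r3 x y].

Lemma count_rel_total x s :
  (size s <= count (r1 x) s + count (r2 x) s + count (r3 x) s)%N.
Proof.
elim: s => //= y s IH; move: (r_total x y).
by case: (r1 x y); case: (r2 x y); case: (r3 x y) => //= _; lia.
Qed.

Lemma ramsey3 p q t s : (3 ^ (p + q + t) <= size s)%N ->
  exists2 s', subseq s' s &
    [|| (size s' == p) && sorted r1 s', (size s' == q) && sorted r2 s'
      | (size s' == t) && sorted r3 s'].
Proof.
have [n] := ubnP (p + q + t); elim: n p q t s => // n IH p q t s.
case: p => [|p] lt_n; first by exists [::]; rewrite ?sub0seq.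
case: q lt_n => [|q] lt_n; first by exists [::]; rewrite ?sub0seq ?orbT.
case: t lt_n => [|t] lt_n; first by exists [::]; rewrite ?sub0seq ?orbT.
set M := 3 ^ (p + q + t).+2.
have eM : [/\ 3 ^ (p + q.+1 + t.+1) = M, 3 ^ (p.+1 + q + t.+1) = M
             & 3 ^ (p.+1 + q.+1 + t) = M].
  by split; congr (_ ^ _); lia.
have -> : 3 ^ (p.+1 + q.+1 + t.+1) = 3 * M by rewrite -expnS; congr (_ ^ _); lia.
case: eM => e1 e2 e3.
case: s => [|x s] /= size_s; first by move: size_s; rewrite leqNgt muln_gt0 expn_gt0.
have cover := count_rel_total x s.
have lift (P : pred T) s' : subseq s' [seq y <- s | P y] -> subseq s' (x :: s).
  by move/subseq_trans; apply; apply: subseq_trans (filter_subseq _ _) (subseq_cons _ _).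
have [c1|c1] := leqP M (count (r1 x) s).
  have [s' sub] := IH p q.+1 t.+1 [seq y <- s | r1 x y] ltac:(lia)
    ltac:(by rewrite e1 size_filter).
  case/or3P => [/andP[/eqP sz so]|H|H]; last 2 first.
  - by exists s'; [exact: lift sub | rewrite H orbT].
  - by exists s'; [exact: lift sub | rewrite H !orbT].
  exists (x :: s'); first by rewrite /= eqxx (subseq_trans sub (filter_subseq _ _)).
  by rewrite (sorted_cons_filter r1_trans sub so) /= sz eqxx.
have [c2|c2] := leqP M (count (r2 x) s).
  have [s' sub] := IH p.+1 q t.+1 [seq y <- s | r2 x y] ltac:(lia)
    ltac:(by rewrite e2 size_filter).
  case/or3P => [H|/andP[/eqP sz so]|H].
  - by exists s'; [exact: lift sub | rewrite H].
  - exists (x :: s'); first by rewrite /= eqxx (subseq_trans sub (filter_subseq _ _)).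
    by rewrite (sorted_cons_filter r2_trans sub so) /= sz eqxx orbT.
  - by exists s'; [exact: lift sub | rewrite H !orbT].
have c3 : (M <= count (r3 x) s)%N by lia.
have [s' sub] := IH p.+1 q.+1 t [seq y <- s | r3 x y] ltac:(lia)
    ltac:(by rewrite e3 size_filter).
case/or3P => [H|H|/andP[/eqP sz so]].
- by exists s'; [exact: lift sub | rewrite H].
- by exists s'; [exact: lift sub | rewrite H orbT].
exists (x :: s'); first by rewrite /= eqxx (subseq_trans sub (filter_subseq _ _)).
by rewrite (sorted_cons_filter r3_trans sub so) /= sz eqxx !orbT.
Qed.

End TransitiveRamsey.

Definition monotone_bound (k r : nat) : nat := iter k (fun m => 3 ^ (3 * m)) r.

Section MonotoneSubsequences.
Local Open Scope order_scope.
Variables (disp : Order.disp_t) (R : orderType disp).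

Definition monotone (s : seq R) : bool :=
  [|| sorted <%O s, sorted >%O s | sorted eq_op s].

Lemma gt_trans : transitive (>%O : rel R).
Proof. by move=> y x z /= xy yz; apply: lt_trans yz xy. Qed.

Lemma eq_op_trans : transitive (@eq_op R).
Proof. by move=> y x z /eqP -> /eqP ->. Qed.

Lemma monotone_subseq (s1 s2 : seq R) : subseq s1 s2 -> monotone s2 -> monotone s1.
Proof.
move=> sub /or3P[] so; apply/or3P; [apply: Or31|apply: Or32|apply: Or33].
- by apply: (subseq_sorted (@lt_trans _ R) sub).
- by apply: (subseq_sorted gt_trans sub).
- by apply: (subseq_sorted eq_op_trans sub).
Qed.

Lemma monotone4_le_max (u v w z : R) :
  monotone [:: u; v; w; z] -> v <= Order.max u w.
Proof.
rewrite /monotone /= !andbT le_max.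
case/or3P=> [/and3P[_ vw _]|/and3P[vu _ _]|/and3P[_ /eqP -> _]].
- by rewrite (ltW vw) orbT.
- by rewrite (ltW vu).
- by rewrite lexx orbT.
Qed.

Lemma monotone4_eq (u v w z : R) :
  monotone [:: u; v; w; z] -> Order.max u z <= w -> v = w.
Proof.
rewrite /monotone /= !andbT ge_max.
case/or3P=> [/and3P[_ _ wz]|/and3P[uv vw _]|/and3P[_ /eqP // _]] /andP[uw zw].
- by move: (lt_le_trans wz zw); rewrite ltxx.
- by move: (lt_le_trans (lt_trans vw uv) uw); rewrite ltxx.
Qed.

Lemma exists_monotone_subseq (T : eqType) (f : T -> R) k (s : seq T) :
  (3 ^ (3 * k) <= size s)%N ->
  exists2 s', subseq s' s & (size s' == k) && monotone (map f s').
Proof.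
have -> : 3 * k = k + k + k by lia.
move=> size_s.
have total x y : [|| relpre f <%O x y, relpre f >%O x y | relpre f eq_op x y].
  by rewrite /=; case: ltgtP.
have [s' sub mono_s'] := ramsey3 (fun y x z => @lt_trans _ R (f y) (f x) (f z))
  (fun y x z => @gt_trans (f y) (f x) (f z)) (fun y x z => @eq_op_trans (f y) (f x) (f z))
  total size_s.
exists s' => //; rewrite /monotone !sorted_map.
by case/or3P: mono_s' => /andP[-> ->]; rewrite ?orbT.
Qed.

Lemma exists_monotone_subseq_all (A : Type) (T : eqType) (g : A -> T -> R) (S : seq A) r
    (s : seq T) :
  (monotone_bound (size S) r <= size s)%N ->
  exists2 s', subseq s' s & (size s' == r) && all (fun a => monotone (map (g a) s')) S.
Proof.
elim: S s => [|a S IH] s size_s /=.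
  by exists (take r s); rewrite ?take_subseq // size_takel ?eqxx.
have [s1 sub1 /andP[/eqP size_s1 mono1]] := exists_monotone_subseq (g a) size_s.
have [s2 sub2 /andP[size_s2 mono2]] := IH s1 (eq_leq (esym size_s1)).
exists s2; first exact: subseq_trans sub2 sub1.
by rewrite size_s2 mono2 (monotone_subseq (map_subseq _ sub2) mono1).
Qed.

End MonotoneSubsequences.

Local Open Scope ring_scope.
Local Open Scope classical_set_scope.

Lemma exists_pos_mul_le (R : realFieldType) (I : eqType) (l : seq I) (e g : I -> R) :
  {in l, forall i, 0 <= e i} -> {in l, forall i, e i = 0 -> g i <= 0} ->
  exists2 t : R, 0 < t & {in l, forall i, t * g i <= e i}.
Proof.
elim: l => [|i l IH] e_ge0 g_le0; first by exists 1.
have sub_l : {subset l <= i :: l} by move=> j lj; rewrite inE lj orbT.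
have [t t_gt0 step] :=
  IH (fun j lj => e_ge0 j (sub_l j lj)) (fun j lj => g_le0 j (sub_l j lj)).
have [ei ei0] : 0 <= e i /\ (e i = 0 -> g i <= 0).
  by split; [apply: e_ge0 | apply: g_le0]; rewrite inE eqxx.
have step_le (t' : R) : 0 < t' <= t -> {in l, forall j, t' * g j <= e j}.
  move=> /andP[t'_gt0 t't] j lj; have := step j lj; have := e_ge0 j (sub_l j lj).
  case: (lerP (g j) 0) => gj; first by have := pmulr_rle0 (g j) t'_gt0; lra.
  by have := ler_pM2r gj t' t; lra.
case: (lerP (g i) 0) => gi.
  exists t => // j; rewrite inE => /orP[/eqP -> | /step //].
  by have := pmulr_rle0 (g i) t_gt0; lra.
have ei_gt0 : 0 < e i by rewrite lt_def ei andbT; apply/eqP => /ei0; lra.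
pose t' := Num.min t (e i / g i).
have t'_gt0 : 0 < t' by rewrite lt_min t_gt0 divr_gt0.
have [t't t'_le] : t' <= t /\ t' <= e i / g i by rewrite /t' !ge_min !lexx orbT.
exists t' => // j; rewrite inE => /orP[/eqP -> | ]; last by apply: step_le; rewrite t'_gt0.
by rewrite -ler_pdivlMr.
Qed.

Lemma dotv_line d (a x y : vec d) t :
  dotv a (y + t *: (y - x)) = dotv a y + t * (dotv a y - dotv a x).
Proof.
rewrite /dotv -sumrB mulr_sumr -big_split /=; apply: eq_bigr => i _.
by rewrite !mxE; ring.
Qed.

Definition polyhedron d (H : seq (vec d * Rdefinitions.R)) : set (vec d) :=
  [set x | forall h, h \in H -> halfspace h.1 h.2 x].

Lemma polyhedron_le_max d (H : seq (vec d * Rdefinitions.R)) (x y z : vec d) :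
  (forall h, h \in H -> dotv h.1 x <= Num.max (dotv h.1 y) (dotv h.1 z)) ->
  polyhedron H y -> polyhedron H z -> polyhedron H x.
Proof.
move=> le_max Py Pz h hH; apply: le_trans (le_max h hH) _.
by rewrite ge_max; apply/andP; split; [exact: Py | exact: Pz].
Qed.

Lemma polyhedron_step_beyond d (H : seq (vec d * Rdefinitions.R)) (x y : vec d) :
  polyhedron H y -> (forall h, h \in H -> dotv h.1 y = h.2 -> dotv h.1 x = h.2) ->
  exists2 t, 0 < t & polyhedron H (y + t *: (y - x)).
Proof.
move=> Py tight.
pose slack (h : vec d * Rdefinitions.R) := h.2 - dotv h.1 y.
pose slope (h : vec d * Rdefinitions.R) := dotv h.1 y - dotv h.1 x.
have slack_ge0 : {in H, forall h, 0 <= slack h}.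
  by move=> h hH; rewrite subr_ge0; exact: Py.
have tight_slope : {in H, forall h, slack h = 0 -> slope h <= 0}.
  move=> h hH /eqP; rewrite subr_eq0 => /eqP /esym yh.
  by rewrite /slope yh (tight h hH yh) subrr.
have [t t_gt0 step] := exists_pos_mul_le slack_ge0 tight_slope.
exists t => // h hH; rewrite /halfspace /= dotv_line.
by have := step h hH; rewrite /slack /slope; lra.
Qed.

Lemma face_extreme d (P F : set (vec d)) (x y : vec d) t :
  face P F -> F y -> P x -> 0 < t -> P (y + t *: (y - x)) -> F x.
Proof.
move=> [c [delta [valid ->]]] [Py cy] Px t_gt0 /valid.
rewrite dotv_line cy => le_delta; split=> //.
have : t * (delta - dotv c x) <= 0 by lra.
by rewrite pmulr_rle0 // subr_le0 => cx; apply/eqP; rewrite eq_le valid.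
Qed.

Lemma underlying_subset d (P : set (vec d)) (C : set (set (vec d))) :
  subcomplex P C -> underlying C `<=` P.
Proof.
move=> [faces _] x [F [CF Fx]]; have [c [delta [_ eF]]] := faces F CF.
by move: Fx; rewrite eF => -[].
Qed.

Lemma underlying_monotone4 d (S : seq (vec d)) (P : set (vec d))
    (C : set (set (vec d))) (xi xj xl xm : vec d) :
  S_polytope S P -> subcomplex P C ->
  underlying C xi -> underlying C xl -> underlying C xm ->
  (forall a, a \in S -> monotone [seq dotv a x | x <- [:: xi; xj; xl; xm]]) ->
  underlying C xj.
Proof.
move=> [_ [H [normals ->]]] complexC Ci [F [CF Fl]] Cm mono.
have [Pi Pl Pm] : [/\ polyhedron H xi, polyhedron H xl & polyhedron H xm].
  by split; apply: underlying_subset complexC _ _ => //; exists F.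
have Pj : polyhedron H xj.
  apply: polyhedron_le_max Pi Pl => h hH; exact: monotone4_le_max (mono _ (normals h hH)).
have [t t_gt0 Pt] : exists2 t, 0 < t & polyhedron H (xl + t *: (xl - xj)).
  apply: polyhedron_step_beyond Pl _ => h hH lh.
  rewrite -lh; apply: monotone4_eq (mono _ (normals h hH)) _.
  by rewrite lh ge_max; apply/andP; split; [exact: Pi | exact: Pm].
have faceF : face (polyhedron H) F by have [faces _] := complexC; exact: faces.
by exists F; split=> //; apply: face_extreme faceF Fl Pj t_gt0 Pt.
Qed.

Lemma helly_critical_witness (T : Type) n (U : 'I_n -> set T) (G : {set 'I_n}) (x0 : T) :
  helly_critical U G ->
  exists x : 'I_n -> T, forall e f, e \in G -> f \in G -> f != e -> U f (x e).
Proof.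
move=> [_ minimal].
have witness e : exists y, e \in G -> fam_inter U (G :\ e) y.
  case: (boolP (e \in G)) => eG; last by exists x0.
  by have [y Gy] := minimal _ (properD1 eG); exists y.
have [x Hx] := choice witness.
by exists x => e f eG fG fe; apply: (Hx e eG); rewrite !inE fe.
Qed.

Lemma helly_critical_card_lt d (S : seq (vec d)) n (U : 'I_n -> set (vec d))
    (G : {set 'I_n}) :
  (forall i, exists P C, S_polytope S P /\ subcomplex P C /\ U i = underlying C) ->
  helly_critical U G -> (#|G| < monotone_bound (size S) 4)%N.
Proof.
move=> complexU critG; rewrite ltnNge; apply/negP => large.
have [x sep] := helly_critical_witness 0 critG.
rewrite cardE in large.
have [s' sub /andP[/eqP size_s' mono]] :=
  exists_monotone_subseq_all (fun a e => dotv a (x e)) large.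
have inG e : e \in s' -> e \in G by move/(mem_subseq sub); rewrite mem_enum.
have uniq_s' := subseq_uniq sub (enum_uniq (mem G)).
case: s' size_s' mono inG uniq_s' {sub} => [|i [|j [|l [|m [|]]]]] //= _ mono inG.
rewrite !inE !negb_or => /and4P[/and3P[ij _ _] /andP[jl jm] _ _].
have [iG jG lG mG] : [/\ i \in G, j \in G, l \in G & m \in G].
  by split; apply: inG; rewrite !inE eqxx ?orbT.
have [P [C [SP [complexC eU]]]] := complexU j.
have Uj : U j (x j).
  rewrite eU; apply: (underlying_monotone4 (xi := x i) (xl := x l) (xm := x m) SP complexC).
  - by rewrite -eU; apply: sep; rewrite // eq_sym.
  - by rewrite -eU; apply: sep.
  - by rewrite -eU; apply: sep.
  by move=> a aS; exact: (allP mono a aS).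
have : fam_inter U G (x j).
  by move=> f fG; case: (eqVneq f j) => [-> // | fj]; apply: sep.
by rewrite critG.1.
Qed.

Theorem corollary5 :
  forall s d : nat, (1 <= s)%N -> (1 <= d)%N ->
  exists h' : nat,
    forall S : seq (vec d),
      uniq S -> size S = s -> (forall a, a \in S -> a != 0) ->
      forall (n : nat) (U : 'I_n -> set (vec d)),
        (forall i : 'I_n, exists (P : set (vec d)) (C : set (set (vec d))),
            S_polytope S P /\ subcomplex P C /\ U i = underlying C) ->
        (helly_number U <= h')%N.
Proof.
move=> s d _ _; exists (monotone_bound s 4) => S _ size_S _ n U complexU.
rewrite /helly_number; case: ifP => _; last by case: (s) => //= k; rewrite expn_gt0.
apply/bigmax_leqP => G /asboolP critG.
by rewrite -size_S ltnW // (helly_critical_card_lt complexU critG).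
Qed.
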